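(* Let $(G,\lambda),s,t$ be a minimum counter-example. Then $G$ is 2-connected, and every multiedge incident to $s$ or to $t$ has multiplicity $1$.
   Context: Graphs are finite, loopless, and may have parallel edges. The multiplicity of a pair $x,y$ is the number of edges with endpoints $x,y$; a pair of multiplicity at least 1 is a multiedge. A temporal graph is a pair $(G,\lambda)$ with $\lambda:E(G)\to\mathbb{Z}_{>0}$. A temporal $s,t$-path is an $s,t$-path $(s=v_1,e_1,\dots,e_{k-1},v_k=t)$ of $G$ (no repeated vertices) with $\lambda(e_1)\le\dots\le\lambda(e_{k-1})$. Two temporal $s,t$-paths are disjoint if they share no vertex other than $s,t$. For distinct non-adjacent $s,t$, a temporal $s,t$-vertex cut is a set $S\subseteq V(G)\setminus\{s,t\}$ such that $G-S$ (with $\lambda$ restricted) has no temporal $s,t$-path. $p_{G,\lambda}(s,t)$ is the maximum number of pairwise disjoint temporal $s,t$-paths and $c_{G,\lambda}(s,t)$ the minimum size of a temporal $s,t$-vertex cut. m-subdividing a multiedge $xy$ of multiplicity $k$: delete the $k$ edges between $x,y$, add a new vertex $z$, $k$ parallel edges $xz$ and $k$ parallel edges $zy$. An m-subdivision of $H$ is a graph obtained from $H$ by a finite (possibly empty) sequence of such operations; $H$ is an m-topological minor of $G$ if $G$ has a subgraph isomorphic to an m-subdivision of $H$. $\mathcal{F}_3$ is the gem: simple graph on $s,u,v,t,x$ with edges $su,uv,vt,xs,xu,xv,xt$. $\mathcal{F}_1$: vertices $s,u,v,t,w,w'$, simple edges $su,uv,vt,sw,wt,uw',w'v$, and exactly two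 parallel edges between $w,w'$. $\mathcal{F}_2$: vertices $s,u,v,t,w,w'$, simple edges $su,uv,vt,sw,uw,w'v,w't$, and exactly two parallel edges between $w,w'$. A minimum counter-example is a triple $(G,\lambda),s,t$ with $s,t\in V(G)$ distinct and non-adjacent, such that $p_{G,\lambda}(s,t)<c_{G,\lambda}(s,t)$, none of $\mathcal{F}_1,\mathcal{F}_2,\mathcal{F}_3$ is an m-topological minor of $G$, and $|V(G)|+|E(G)|$ is minimum among all such triples. *)

From mathcomp Require Import all_boot.
Set Implicit Arguments. Unset Strict Implicit. Unset Printing Implicit Defensive.

(* A finite multigraph: vertices 'I_nv, edges 'I_ne, each edge has an
   (unordered) pair of endpoints stored as an ordered pair.  Parallel edges
   are allowed; looplessness is the predicate [loopless]. *)
Record mgraph := MG {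
  nv : nat;
  ne : nat;
  ends : 'I_ne -> 'I_nv * 'I_nv
}.

Definition vert (G : mgraph) := 'I_(nv G).
Definition edge (G : mgraph) := 'I_(ne G).

Definition loopless (G : mgraph) : Prop :=
  forall e : 'I_(ne G), (ends e).1 != (ends e).2.

Definition joins (G : mgraph) (e : 'I_(ne G)) (x y : 'I_(nv G)) : bool :=
  (((ends e).1 == x) && ((ends e).2 == y)) ||
  (((ends e).1 == y) && ((ends e).2 == x)).

Definition mult (G : mgraph) (x y : 'I_(nv G)) : nat :=
  #|[pred e : 'I_(ne G) | joins e x y]|.

Definition adjacent (G : mgraph) (x y : 'I_(nv G)) : Prop :=
  exists e : 'I_(ne G), joins e x y.

Definition gsize (G : mgraph) : nat := nv G + ne G.

Fixpoint is_walk (G : mgraph) (v : 'I_(nv G)) (st : seq ('I_(ne G) * 'I_(nv G)))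
  : bool :=
  match st with
  | [::] => true
  | (e, w) :: st' => joins e v w && is_walk w st'
  end.

Definition pverts (G : mgraph) (s : 'I_(nv G)) (st : seq ('I_(ne G) * 'I_(nv G)))
  : seq 'I_(nv G) := s :: map snd st.

Definition tpath (G : mgraph) (lam : 'I_(ne G) -> nat) (s t : 'I_(nv G))
  (st : seq ('I_(ne G) * 'I_(nv G))) : bool :=
  [&& is_walk s st, last s (map snd st) == t, uniq (pverts s st)
    & sorted leq (map (fun p => lam p.1) st)].

Definition pdisjoint (G : mgraph) (s t : 'I_(nv G))
  (P Q : seq ('I_(ne G) * 'I_(nv G))) : Prop :=
  forall v, v \in pverts s P -> v \in pverts s Q -> v = s \/ v = t.

Definition has_disj_paths (G : mgraph) (lam : 'I_(ne G) -> nat) (s t : 'I_(nv G))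
  (k : nat) : Prop :=
  exists P : 'I_k -> seq ('I_(ne G) * 'I_(nv G)),
    (forall i, tpath lam s t (P i)) /\
    (forall i j, i != j -> pdisjoint s t (P i) (P j)).

Definition is_p (G : mgraph) (lam : 'I_(ne G) -> nat) (s t : 'I_(nv G)) (n : nat)
  : Prop :=
  has_disj_paths lam s t n /\ (forall m, has_disj_paths lam s t m -> m <= n).

Definition tcut (G : mgraph) (lam : 'I_(ne G) -> nat) (s t : 'I_(nv G))
  (S : {set 'I_(nv G)}) : Prop :=
  s \notin S /\ t \notin S /\
  forall st, tpath lam s t st -> ~ (all (fun v => v \notin S) (pverts s st)).

Definition is_c (G : mgraph) (lam : 'I_(ne G) -> nat) (s t : 'I_(nv G)) (n : nat)
  : Prop :=
  (exists S, tcut lam s t S /\ #|S| = n) /\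
  (forall S, tcut lam s t S -> n <= #|S|).

(* H' is obtained from H by m-subdividing a multiedge xy of multiplicity k:
   V(H') = phi(V(H)) + {z}; the edges of H not between x,y correspond
   bijectively (via psi) to the edges of H' not incident to z, with the
   corresponding endpoints; z is incident exactly to k edges to phi x and
   k edges to phi y. *)
Definition msub_step (H H' : mgraph) : Prop :=
  exists (x y : 'I_(nv H)), x != y /\ 0 < mult x y /\
  exists (z : 'I_(nv H')) (phi : 'I_(nv H) -> 'I_(nv H'))
         (psi : 'I_(ne H) -> 'I_(ne H')),
    [/\ injective phi,
        (forall v, phi v != z) &
        (forall w, w != z -> exists v, phi v = w)] /\
    (forall e, ~~ joins e x y -> joins (psi e) (phi (ends e).1) (phi (ends e).2)) /\
    (forall e1 e2, ~~ joins e1 x y -> ~~ joins e2 x y -> psi e1 = psi e2 -> e1 = e2) /\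
    (forall e', ~~ [exists w, joins e' z w] ->
        exists e, ~~ joins e x y /\ psi e = e') /\
    (forall e', (exists w, joins e' z w) -> joins e' z (phi x) || joins e' z (phi y)) /\
    mult z (phi x) = mult x y /\ mult z (phi y) = mult x y.

Inductive msubdiv : mgraph -> mgraph -> Prop :=
  | msubdiv_refl H : msubdiv H H
  | msubdiv_step H H1 H2 : msub_step H H1 -> msubdiv H1 H2 -> msubdiv H H2.

Definition subgraph_iso (H G : mgraph) : Prop :=
  exists (f : 'I_(nv H) -> 'I_(nv G)) (g : 'I_(ne H) -> 'I_(ne G)),
    injective f /\ injective g /\
    forall e, joins (g e) (f (ends e).1) (f (ends e).2).

Definition mtop_minor (H G : mgraph) : Prop :=
  exists H', msubdiv H H' /\ subgraph_iso H' G.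

Definition mk_graph (n : nat) (l : seq (nat * nat)) : mgraph :=
  @MG n.+1 (size l)
    (fun e : 'I_(size l) => let p := nth (0, 0) l e in
       ((inord p.1 : 'I_n.+1), (inord p.2 : 'I_n.+1))).

(* vertex numbering: s=0, u=1, v=2, t=3, w=4, w'=5 *)
Definition F1 : mgraph :=
  mk_graph 5 [:: (0,1); (1,2); (2,3); (0,4); (4,3); (1,5); (5,2); (4,5); (4,5)].
Definition F2 : mgraph :=
  mk_graph 5 [:: (0,1); (1,2); (2,3); (0,4); (1,4); (5,2); (5,3); (4,5); (4,5)].
(* gem: s=0, u=1, v=2, t=3, x=4 *)
Definition F3 : mgraph :=
  mk_graph 4 [:: (0,1); (1,2); (2,3); (4,0); (4,1); (4,2); (4,3)].

Definition counterex (G : mgraph) (lam : 'I_(ne G) -> nat) (s t : 'I_(nv G)) : Prop :=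
  [/\ loopless G, (forall e, 0 < lam e), s != t & ~ adjacent s t] /\
  (exists p c, [/\ is_p lam s t p, is_c lam s t c & p < c]) /\
  [/\ ~ mtop_minor F1 G, ~ mtop_minor F2 G & ~ mtop_minor F3 G].

Definition min_counterex (G : mgraph) (lam : 'I_(ne G) -> nat) (s t : 'I_(nv G))
  : Prop :=
  counterex lam s t /\
  forall (G' : mgraph) (lam' : 'I_(ne G') -> nat) (s' t' : 'I_(nv G')),
    counterex lam' s' t' -> gsize G <= gsize G'.

Definition adjb (G : mgraph) : rel 'I_(nv G) :=
  fun x y => [exists e : 'I_(ne G), joins e x y].

Definition connected_minus (G : mgraph) (X : {set 'I_(nv G)}) : Prop :=
  forall x y, x \notin X -> y \notin X ->
    connect (fun a b => [&& adjb a b, a \notin X & b \notin X]) x y.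

Definition k_connected (k : nat) (G : mgraph) : Prop :=
  k < nv G /\ forall X : {set 'I_(nv G)}, #|X| < k -> connected_minus X.

From mathcomp Require Import all_boot.
Set Implicit Arguments. Unset Strict Implicit. Unset Printing Implicit Defensive.

(* A minimum counter-example has no removable part: if G' embeds in G and every
   temporal s,t-path of G can be rerouted, with the same vertex sequence, through
   the image of G', then p, c and the excluded m-topological minors carry over to
   G', contradicting minimality.  Of two parallel edges at s, the one with the
   smaller label can replace the other, because an edge at s can only be the
   first edge of a temporal path (at t: the larger label, and the last edge).
   If G - X is disconnected for some |X| <= 1, then either X is a temporal cut,
   so that c <= 1 forces p = 0 and then c = 0, or some vertex is separated from
   both s and t; it then lies on no temporal s,t-path, and removing one of its
   edges, or the vertex itself when it is isolated, is harmless. *)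

Section Joins.
Variable G : mgraph.
Implicit Types (e : 'I_(ne G)) (x y u v : 'I_(nv G)).

Lemma joinsC e x y : joins e x y = joins e y x.
Proof. by rewrite /joins orbC. Qed.

Lemma joins_ends e : joins e (ends e).1 (ends e).2.
Proof. by rewrite /joins !eqxx. Qed.

Lemma joins_endpoint e x y u v : joins e x y -> joins e u v -> x = u \/ x = v.
Proof.
rewrite /joins; case: (ends e) => p q /=.
by do 2 (case/orP => /andP[/eqP ? /eqP ?]); subst; auto.
Qed.

Lemma joins_parallel e1 e2 x y u v :
  joins e1 x y -> joins e2 x y -> joins e1 u v -> joins e2 u v.
Proof.
rewrite /joins; case: (ends e1) => p q /=; case: (ends e2) => p' q' /=.
by do 3 (case/orP => /andP[/eqP ? /eqP ?]); subst; rewrite !eqxx ?orbT.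
Qed.

Lemma adjb_sym : symmetric (@adjb G).
Proof. by move=> x y; apply/existsP/existsP => [] [e he]; exists e; rewrite joinsC. Qed.

Lemma mult_gt1 x y e0 : 1 < mult x y -> joins e0 x y -> exists2 e1, joins e1 x y & e1 != e0.
Proof.
move=> hm he0; have [e1 | hnone] := pickP [pred e | joins e x y && (e != e0)].
  by case/andP => he1 hne; exists e1.
suff : mult x y <= #|pred1 e0| by rewrite card1 leqNgt hm.
apply: subset_leq_card; apply/subsetP => e; rewrite !inE => he.
by move: (hnone e); rewrite /= he => /negbFE.
Qed.

End Joins.

Section Walks.
Variable G : mgraph.
Implicit Types (a x y v : 'I_(nv G)) (e : 'I_(ne G)) (P : seq ('I_(ne G) * 'I_(nv G))).

Lemma is_walk_rcons a P e v :
  is_walk a (rcons P (e, v)) = is_walk a P && joins e (last a (map snd P)) v.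
Proof. by elim: P a => [|[e' w] P IH] a /=; rewrite ?andbT // IH andbA. Qed.

Lemma walk_step a P e v :
  is_walk a P -> (e, v) \in P -> exists2 u, u \in pverts a P & joins e u v.
Proof.
elim: P a => [|[e' w] P IH] a //= /andP[hj hw].
rewrite in_cons => /orP[/eqP [-> ->]|hin]; first by exists a; rewrite ?mem_head.
by have [u hu hj'] := IH _ hw hin; exists u; rewrite // /pverts in_cons hu orbT.
Qed.

Lemma walk_avoid_edge a P e x y :
  is_walk a P -> x \notin pverts a P -> joins e x y -> all (fun p => p.1 != e) P.
Proof.
move=> hw hx hj; apply/allP => -[e' v] hin /=; apply: contra hx => /eqP ee; subst e'.
have [u hu hju] := walk_step hw hin.
have hv : v \in pverts a P by rewrite in_cons; apply/orP; right; apply/mapP; exists (e, v).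
by case: (joins_endpoint hj hju) => ->.
Qed.

Lemma walk_path a P : is_walk a P -> path (@adjb G) a (map snd P).
Proof.
elim: P a => [|[e w] P IH] a //= /andP[hj hw].
by rewrite IH // andbT; apply/existsP; exists e.
Qed.

End Walks.

Lemma path_leq_head (a b : nat) l : b <= a -> path leq a l -> path leq b l.
Proof. by case: l => //= c l h /andP[hc ->]; rewrite (leq_trans h hc). Qed.

Lemma sorted_leq_rcons (l : seq nat) a b :
  a <= b -> sorted leq (rcons l a) -> sorted leq (rcons l b).
Proof.
case: l => //= x l h; rewrite !rcons_path => /andP[-> ha] /=.
exact: leq_trans ha h.
Qed.

Record emb (G' G : mgraph) := Emb {
  vf : 'I_(nv G') -> 'I_(nv G);
  ef : 'I_(ne G') -> 'I_(ne G);
  vf_inj : injective vf;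
  ef_inj : injective ef;
  emb_ends : forall e, ends (ef e) = (vf (ends e).1, vf (ends e).2) }.

Section Embedding.
Variables (G' G : mgraph) (E : emb G' G).
Local Notation f := (vf E).
Local Notation g := (ef E).
Let finj := @vf_inj _ _ E.
Let ginj := @ef_inj _ _ E.

Lemma joins_emb e a b : joins (g e) (f a) (f b) = joins e a b.
Proof. by rewrite /joins emb_ends /= !(inj_eq finj). Qed.

Definition emb_steps (P : seq ('I_(ne G') * 'I_(nv G'))) :=
  map (fun p => (g p.1, f p.2)) P.

Lemma is_walk_emb a P : is_walk (f a) (emb_steps P) = is_walk a P.
Proof. by elim: P a => [|[e w] P IH] a //=; rewrite joins_emb IH. Qed.

Lemma pverts_emb a P : pverts (f a) (emb_steps P) = map f (pverts a P).
Proof. by rewrite /pverts /emb_steps /= -!map_comp. Qed.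

Lemma tpath_emb (lam : 'I_(ne G) -> nat) a b P :
  tpath lam (f a) (f b) (emb_steps P) = tpath (fun e => lam (g e)) a b P.
Proof.
rewrite /tpath is_walk_emb pverts_emb (map_inj_uniq finj).
have -> : map snd (emb_steps P) = map f (map snd P) by rewrite /emb_steps -!map_comp.
by rewrite last_map (inj_eq finj) /emb_steps -map_comp.
Qed.

Lemma emb_steps_lift a (Q : seq ('I_(ne G) * 'I_(nv G))) :
  is_walk (f a) Q -> all (fun p => p.1 \in codom g) Q -> exists P, Q = emb_steps P.
Proof.
elim: Q a => [|[e v] Q IH] a /=; first by exists [::].
move=> hjw /andP[/codomP [e' ee] hall]; rewrite ee in hjw; case/andP: hjw => hj hw.
have [v' ev] : exists v', v = f v'.
  move: hj; rewrite /joins emb_ends /=.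
  by case/orP => /andP[h1 h2]; [move/eqP: h2 | move/eqP: h1] => <-; eexists.
subst v; have [P ->] := IH _ hw hall.
by rewrite ee; exists ((e', v') :: P).
Qed.

Lemma minor_emb H : mtop_minor H G' -> mtop_minor H G.
Proof.
case=> H' [hsub [fh [gh [fi [gi hj]]]]]; exists H'; split => //.
exists (fun v => f (fh v)), (fun e => g (gh e)); split; first by move=> x y /finj /fi.
by split; [move=> x y /ginj /gi | move=> e; rewrite joins_emb].
Qed.

Variables (lam : 'I_(ne G) -> nat) (s t : 'I_(nv G')).
Let lam' := fun e => lam (g e).
Hypothesis reroute : forall P, tpath lam (f s) (f t) P ->
  exists Q, [/\ tpath lam (f s) (f t) Q, pverts (f s) Q = pverts (f s) P &
                all (fun p => p.1 \in codom g) Q].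

Lemma tpath_pull P : tpath lam (f s) (f t) P ->
  exists P', tpath lam' s t P' && (map f (pverts s P') == pverts (f s) P).
Proof.
move=> /reroute [Q [hQ hv hall]].
have [hw _ _ _] := and4P hQ.
have [P' eP] := emb_steps_lift hw hall.
by exists P'; rewrite -tpath_emb -pverts_emb -eP hQ -hv eqxx.
Qed.

Lemma disj_paths_push k : has_disj_paths lam' s t k -> has_disj_paths lam (f s) (f t) k.
Proof.
case=> P [hP hd]; exists (fun i => emb_steps (P i)); split.
  by move=> i; rewrite tpath_emb.
move=> i j hij v; rewrite !pverts_emb => /mapP [u hu ->] /mapP [u' hu' /finj eu].
by subst u'; case: (hd i j hij u hu hu') => ->; auto.
Qed.

Lemma disj_paths_pull k : has_disj_paths lam (f s) (f t) k -> has_disj_paths lam' s t k.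
Proof.
case=> P [hP hd]; exists (fun i => xchoose (tpath_pull (hP i))); split.
  by move=> i; case/andP: (xchooseP (tpath_pull (hP i))).
move=> i j hij u hu hu'.
case/andP: (xchooseP (tpath_pull (hP i))) => _ /eqP ei.
case/andP: (xchooseP (tpath_pull (hP j))) => _ /eqP ej.
have := hd i j hij (f u); rewrite -ei -ej !(mem_map finj).
by move=> /(_ hu hu') [] /finj ->; auto.
Qed.

Lemma tcut_push S' : tcut lam' s t S' -> tcut lam (f s) (f t) (f @: S').
Proof.
case=> hs [ht hc]; split; first by rewrite mem_imset.
split=> [|P hP hall]; first by rewrite mem_imset.
case/andP: (xchooseP (tpath_pull hP)) => hP' /eqP eP.
apply: (hc _ hP'); apply/allP => u hu.
have : f u \in pverts (f s) P by rewrite -eP map_f.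
by move/(allP hall); rewrite mem_imset.
Qed.

Lemma tcut_pull S : tcut lam (f s) (f t) S -> tcut lam' s t (f @^-1: S).
Proof.
case=> hs [ht hc]; split; first by rewrite inE.
split=> [|P hP hall]; first by rewrite inE.
apply: (hc (emb_steps P)); first by rewrite tpath_emb.
rewrite pverts_emb; apply/allP => _ /mapP [u hu ->].
by have := allP hall u hu; rewrite inE.
Qed.

Lemma card_preimset_le (S : {set 'I_(nv G)}) : #|f @^-1: S| <= #|S|.
Proof.
rewrite -(card_imset _ finj); apply: subset_leq_card.
by apply/subsetP => v /imsetP [u]; rewrite inE => hu ->.
Qed.

Lemma counterex_pull : counterex lam (f s) (f t) -> counterex lam' s t.
Proof.
case=> [[hl hpos hst hadj] [[p [c [[hp hpmax] [[S [hS eS]] hcmin] hpc]]] [m1 m2 m3]]].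
split; last split; last by split; move/minor_emb.
  split=> [e||| [e he]].
  - by have := hl (g e); rewrite emb_ends /=; apply: contra => /eqP ->.
  - by move=> e; apply: hpos.
  - by apply: contra hst => /eqP ->.
  - by apply: hadj; exists (g e); rewrite joins_emb.
exists p, c; split=> //.
  split=> [|m /disj_paths_push]; [exact: disj_paths_pull | exact: hpmax].
split=> [|S' /tcut_push /hcmin]; last by rewrite (card_imset _ finj).
exists (f @^-1: S); split; first exact: tcut_pull.
apply/eqP; rewrite eqn_leq -{1}eS card_preimset_le /=.
by move: (hcmin _ (tcut_push (tcut_pull hS))); rewrite (card_imset _ finj).
Qed.

Lemma min_counterex_emb : min_counterex lam (f s) (f t) -> gsize G <= gsize G'.
Proof. by case=> hc hmin; exact: hmin _ _ _ _ (counterex_pull hc). Qed.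

End Embedding.

Definition del_edge (G : mgraph) (e0 : 'I_(ne G)) : mgraph :=
  @MG (nv G) (ne G).-1 (fun e => ends (lift e0 e)).

Definition emb_del_edge (G : mgraph) (e0 : 'I_(ne G)) : emb (del_edge e0) G.
Proof.
refine (@Emb (del_edge e0) G id (lift e0) (fun x y h => h) (@lift_inj _ e0) _).
by move=> e /=; case: (ends _).
Defined.

(* The vertex d is a dummy image for w under [unlift]; it is never used when w
   is isolated. *)
Definition del_vertex (G : mgraph) (w : 'I_(nv G)) (d : 'I_(nv G).-1) : mgraph :=
  @MG (nv G).-1 (ne G)
    (fun e => (odflt d (unlift w (ends e).1), odflt d (unlift w (ends e).2))).

Lemma lift_odflt_unlift n (w : 'I_n) (d : 'I_n.-1) v :
  v != w -> lift w (odflt d (unlift w v)) = v.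
Proof. by case: (unliftP w v) => [j ->|->]; rewrite ?eqxx. Qed.

Definition emb_del_vertex (G : mgraph) (w : 'I_(nv G)) (d : 'I_(nv G).-1)
  (hw : forall e, ((ends e).1 != w) && ((ends e).2 != w)) : emb (del_vertex w d) G.
Proof.
refine (@Emb (del_vertex w d) G (lift w) id (@lift_inj _ w) (fun x y h => h) _).
move=> e /=; case/andP: (hw e) => h1 h2.
by rewrite !lift_odflt_unlift //; apply: surjective_pairing.
Defined.

Section MinCounterex.
Variables (G : mgraph) (lam : 'I_(ne G) -> nat) (s t : 'I_(nv G)).
Implicit Types (P Q : seq ('I_(ne G) * 'I_(nv G))) (X : {set 'I_(nv G)}).

Lemma counterex_tpath : counterex lam s t -> ~ (forall P, ~ tpath lam s t P).
Proof.
case=> _ [[p [c [_ [_ hc] hpc]]] _] hno.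
have : c <= #|(set0 : {set 'I_(nv G)})|.
  by apply: hc; split; rewrite ?inE //; split=> // P /hno.
by rewrite cards0 leqn0 => /eqP hc0; rewrite hc0 in hpc.
Qed.

Lemma counterex_tcut_gt1 X : counterex lam s t -> tcut lam s t X -> 1 < #|X|.
Proof.
move=> hce hX; rewrite ltnNge; apply/negP => hX1.
have [_ [[p [c [[_ hpmax] [_ hcmin] hpc]]] _]] := hce.
have hc1 : c <= 1 := leq_trans (hcmin _ hX) hX1.
have hp0 : p = 0 by apply/eqP; rewrite -leqn0 -ltnS (leq_trans hpc hc1).
apply: (counterex_tpath hce) => P hP.
suff : 1 <= p by rewrite hp0.
by apply: hpmax; exists (fun=> P); split=> // i j; rewrite !ord1 eqxx.
Qed.

Lemma counterex_nv_gt2 : counterex lam s t -> 2 < nv G.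
Proof.
move=> hce; have [[_ _ hst hadj] _] := hce.
rewrite ltnNge; apply/negP => hle; apply: (counterex_tpath hce) => P.
case/and4P => hw hl hu _.
have := max_card (mem (pverts s P)); rewrite (card_uniqP hu) card_ord.
case: P hw hl hu => [|[e v] [|[e' v'] P]] /= hw hl hu.
- by rewrite hl in hst.
- by move=> _; apply: hadj; exists e; rewrite -(eqP hl); case/andP: hw.
- by move=> h; have := leq_trans h hle.
Qed.

Hypothesis hmin : min_counterex lam s t.

Lemma min_counterex_no_redundant_edge e0 :
  ~ (forall P, tpath lam s t P ->
       exists Q, [/\ tpath lam s t Q, pverts s Q = pverts s P & all (fun p => p.1 != e0) Q]).
Proof.
move=> hre; suff : gsize G <= gsize (del_edge e0).
  by rewrite /gsize /= leqNgt ltn_add2l ltn_predL (leq_ltn_trans _ (ltn_ord e0)).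
apply: (@min_counterex_emb _ _ (emb_del_edge e0)) hmin => P /hre [Q [hQ hv hall]].
exists Q; split=> //.
apply/allP => p /(allP hall); case: (unliftP e0 p.1) => [j -> _|->]; last by rewrite eqxx.
exact: codom_f.
Qed.

Lemma min_counterex_no_isolated_vertex w :
  w != s -> w != t -> ~ (forall e, ((ends e).1 != w) && ((ends e).2 != w)).
Proof.
move=> hs ht hw.
case: (unliftP w s) => [s' es|es]; last by rewrite es eqxx in hs.
case: (unliftP w t) => [t' et|et]; last by rewrite et eqxx in ht.
suff : gsize G <= gsize (del_vertex w s').
  by rewrite /gsize /= leqNgt ltn_add2r ltn_predL (leq_ltn_trans _ (ltn_ord w)).
apply: (@min_counterex_emb _ _ (emb_del_vertex s' hw) lam s' t') => [P hP|].
  by exists P; split=> //; apply/allP => p _; apply: codom_f.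
by rewrite /= -es -et.
Qed.

Lemma min_counterex_vertex_on_tpath w :
  w != s -> w != t -> ~ (forall P, tpath lam s t P -> w \notin pverts s P).
Proof.
move=> hs ht hnot.
have [e0 he0 | hnone] := pickP [pred e | (w == (ends e).1) || (w == (ends e).2)].
  apply: (@min_counterex_no_redundant_edge e0) => P hP; exists P; split=> //.
  have [y hj] : exists y, joins e0 w y.
    case/orP: he0 => /eqP ->; [exists (ends e0).2 | exists (ends e0).1; rewrite joinsC];
      exact: joins_ends.
  have [hw _ _ _] := and4P hP.
  exact: walk_avoid_edge hw (hnot P hP) hj.
apply: (min_counterex_no_isolated_vertex hs ht) => e.
by move: (hnone e) => /= /negbT; rewrite negb_or !(eq_sym w).
Qed.

Lemma min_counterex_mult_s y : 0 < mult s y -> mult s y = 1.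
Proof.
move=> hpos; apply/eqP; rewrite eqn_leq hpos andbT leqNgt; apply/negP => h2.
have [e0] := card_gt0P hpos; rewrite inE => he0.
case: (@arg_minnP _ e0 (fun e => joins e s y) lam he0) => emin hjm hlam.
have [e1 hj1 hne] := mult_gt1 h2 hjm.
apply: (@min_counterex_no_redundant_edge e1) => -[|[e v] P] /and4P[hw hl hu hs].
  by have [[[_ _ hst _] _] _] := hmin; rewrite /= in hl; rewrite hl in hst.
case/andP: hw => hj hw.
have hsP : s \notin pverts v P by case/andP: hu.
exists ((if e == e1 then emin else e, v) :: P); split=> //=.
- apply/and4P; split=> //=.
  + apply/andP; split=> //; case: ifP => // /eqP ee; subst e.
    exact: joins_parallel hj1 hjm hj.
  + by move: hs => /=; case: ifP => // /eqP ee; subst e; apply/path_leq_head/hlam.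
- rewrite (walk_avoid_edge hw hsP hj1) andbT.
  by case: ifP => [_|/negbT]; rewrite // eq_sym.
Qed.

Lemma min_counterex_mult_t y : 0 < mult t y -> mult t y = 1.
Proof.
move=> hpos; apply/eqP; rewrite eqn_leq hpos andbT leqNgt; apply/negP => h2.
have [e0] := card_gt0P hpos; rewrite inE => he0.
case: (@arg_maxnP _ e0 (fun e => joins e t y) lam he0) => emax hjm hlam.
have [e1 hj1 hne] := mult_gt1 h2 hjm.
apply: (@min_counterex_no_redundant_edge e1) => P /and4P[hw hl hu hs].
case/lastP: P hw hl hu hs => [|P [e v]] hw hl hu hs.
  by have [[[_ _ hst _] _] _] := hmin; rewrite /= in hl; rewrite hl in hst.
rewrite map_rcons last_rcons /= in hl; move/eqP: hl => hl; subst v.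
rewrite is_walk_rcons in hw; case/andP: hw => hw hj.
have hpv Q e' : pverts s (rcons Q (e', t)) = rcons (pverts s Q) t by rewrite /pverts map_rcons.
have htP : t \notin pverts s P by move: hu; rewrite hpv rcons_uniq => /andP[].
exists (rcons P (if e == e1 then emax else e, t)); split; rewrite ?hpv //.
- apply/and4P; split.
  + rewrite is_walk_rcons hw /=; case: ifP => // /eqP ee; subst e.
    exact: joins_parallel hj1 hjm hj.
  + by rewrite map_rcons last_rcons.
  + by rewrite hpv; rewrite hpv in hu.
  + move: hs; rewrite !map_rcons /=; case: ifP => // /eqP ee; subst e.
    exact/sorted_leq_rcons/hlam.
- rewrite all_rcons (walk_avoid_edge hw htP hj1) andbT.
  by case: ifP => [_|/negbT]; rewrite //= eq_sym.
Qed.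

End MinCounterex.

Definition adjb_minus (G : mgraph) (X : {set 'I_(nv G)}) : rel 'I_(nv G) :=
  fun a b => [&& adjb a b, a \notin X & b \notin X].

Section Separation.
Variables (G : mgraph) (X : {set 'I_(nv G)}).
Implicit Types (a b x y u : 'I_(nv G)) (P : seq ('I_(ne G) * 'I_(nv G))).
Local Notation conX := (connect (adjb_minus X)).

Lemma adjb_minus_sym : connect_sym (adjb_minus X).
Proof.
apply: sym_connect_sym => a b; rewrite /adjb_minus adjb_sym.
by case: (a \in X); case: (b \in X); rewrite ?andbF ?andbT.
Qed.

Lemma path_adjb_minus a l :
  path (@adjb G) a l -> all (fun v => v \notin X) (a :: l) -> path (adjb_minus X) a l.
Proof.
elim: l a => [|b l IH] a //= /andP[hab hp] /and3P[ha hb hl].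
by rewrite /adjb_minus hab ha hb /= IH //= hb.
Qed.

(* The vertex sequence is uniq and |X| <= 1, so X cannot meet it both before and
   after u. *)
Lemma walk_split_avoid a P u :
  #|X| <= 1 -> is_walk a P -> uniq (pverts a P) -> u \in pverts a P -> u \notin X ->
  (a \notin X /\ conX a u) \/
  (last a (map snd P) \notin X /\ conX u (last a (map snd P))).
Proof.
move=> /card_le1_eqP hX /walk_path; rewrite /pverts.
set vs := map snd P => hp hu; rewrite in_cons => /orP[/eqP ->|hin] hux.
  by left; split=> //; apply: connect0.
case/splitPr: hin hp hu => p1 p2; rewrite cat_path => /andP[hp1 /andP[hlu hp2]] hu.
have [/hasP [x hx hxX] | /hasPn hno] := boolP (has (mem X) (a :: p1)).
- right; have hall : all (fun v => v \notin X) (u :: p2).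
    apply/allP => v hv; apply/negP => hvX.
    move: hu; rewrite -cat_cons cat_uniq => /and3P[_ /hasPn /(_ v hv) + _].
    by rewrite (hX x v hxX hvX) hx.
  rewrite last_cat /=; split; first exact: (allP hall) _ (mem_last _ _).
  exact: (path_connect (path_adjb_minus hp2 hall)) _ (mem_last _ _).
- left; have hall : all (fun v => v \notin X) (a :: rcons p1 u).
    by rewrite -rcons_cons all_rcons hux; apply/allP.
  split; first by case/andP: hall.
  apply: (path_connect (path_adjb_minus _ hall)); first by rewrite rcons_path hp1 hlu.
  by rewrite -rcons_cons mem_rcons mem_head.
Qed.

Lemma separated_from_pair a b x y :
  #|X| <= 1 -> x != y -> (x \notin X -> y \notin X -> conX x y) ->
  a \notin X -> b \notin X -> ~~ conX a b ->
  exists2 w, w \notin X & forall v, (v == x) || (v == y) -> v \notin X -> ~~ conX w v.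
Proof.
move=> /card_le1_eqP hX hxy hconn ha hb hab.
have [r hrX hr] : exists2 r, r \notin X &
    forall v, (v == x) || (v == y) -> v \notin X -> conX v r.
  have [hxX | hxX] := boolP (x \in X).
    have hyX : y \notin X by apply: contra hxy => /(hX x y hxX) ->.
    by exists y => // v /orP[] /eqP ->; rewrite ?hxX // => _; apply: connect0.
  exists x => // v /orP[] /eqP -> hv; first exact: connect0.
  by rewrite adjb_minus_sym; apply: hconn.
have [w hwX hwr] : exists2 w, w \notin X & ~~ conX w r.
  have [har | har] := boolP (conX a r); last by exists a.
  by exists b => //; apply: contra hab => hbr; rewrite (connect_trans har) // adjb_minus_sym.
exists w => // v hv hvX; apply: contra hwr => hwv.
exact: connect_trans hwv (hr v hv hvX).
Qed.

End Separation.

Lemma tcut_of_disconnected (G : mgraph) (lam : 'I_(ne G) -> nat) s t (X : {set 'I_(nv G)}) :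
  s \notin X -> t \notin X -> ~~ connect (adjb_minus X) s t -> tcut lam s t X.
Proof.
move=> hs ht hnst; split=> //; split=> // P /and4P[hw hl _ _] hall.
have := path_connect (path_adjb_minus (walk_path hw) hall) (mem_last s (map snd P)).
by rewrite (eqP hl) (negbTE hnst).
Qed.

Lemma min_counterex_2connected (G : mgraph) (lam : 'I_(ne G) -> nat) s t :
  min_counterex lam s t -> k_connected 2 G.
Proof.
move=> hm; have [hce _] := hm; have [[_ _ hst _] _] := hce.
split=> [|X hX a b ha hb]; first exact: counterex_nv_gt2 hce.
apply/negPn/negP => hab.
have hst_conn : s \notin X -> t \notin X -> connect (adjb_minus X) s t.
  move=> hs ht; apply/negPn/negP => hnst.
  have := counterex_tcut_gt1 hce (tcut_of_disconnected lam hs ht hnst).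
  by move/(leq_trans hX); rewrite ltnn.
have [w hwX hw] := separated_from_pair hX hst hst_conn ha hb hab.
have hwst v : (v == s) || (v == t) -> w != v.
  by move=> hv; apply/eqP => ewv; subst v; move: (hw w hv hwX); rewrite connect0.
apply: (min_counterex_vertex_on_tpath hm (hwst s _) (hwst t _)); rewrite ?eqxx ?orbT //.
move=> P /and4P[hwalk hl hu _]; apply/negP => hin.
case: (walk_split_avoid hX hwalk hu hin hwX) => [[hsX] | []]; last rewrite (eqP hl).
  by rewrite adjb_minus_sym; apply/negP/hw; rewrite ?eqxx.
by move=> htX; apply/negP/hw; rewrite ?eqxx ?orbT.
Qed.

Theorem lemma5 (G : mgraph) (lam : 'I_(ne G) -> nat) (s t : 'I_(nv G)) :
  min_counterex lam s t ->
  k_connected 2 G /\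
  (forall y, 0 < mult s y -> mult s y = 1) /\
  (forall y, 0 < mult t y -> mult t y = 1).
Proof.
move=> hm; split; first exact: min_counterex_2connected hm.
by split=> y; [exact: (min_counterex_mult_s hm) | exact: (min_counterex_mult_t hm)].
Qed.
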